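(* Let $X$ be an orthomodular lattice. For every $a\in X$, the downset morphism $a:\downarrow a\to X$ is a dagger kernel in $\mathbf{OMLatGal}$, and the map $X\to\mathrm{KSub}(X)$, $a\mapsto(a:\downarrow a\to X)$, is an isomorphism of orthomodular lattices. It is natural in the sense that for every morphism $f:X\to Y$ of $\mathbf{OMLatGal}$, under these isomorphisms $\exists_f:\mathrm{KSub}(X)\to\mathrm{KSub}(Y)$ corresponds to $a\mapsto f_*(a)^\perp$ and $f^{-1}:\mathrm{KSub}(Y)\to\mathrm{KSub}(X)$ corresponds to $b\mapsto f^*(b^\perp)$.
   Context: An orthomodular lattice is a bounded lattice with an order-reversing involution $x\mapsto x^\perp$ such that $x\wedge x^\perp=0$, $x\vee x^\perp=1$, and $x\le y$ implies $y=x\vee(x^\perp\wedge y)$. The category $\mathbf{OMLatGal}$ has orthomodular lattices as objects; a morphism $f:X\to Y$ is a pair $(f_*,f^* )$ of order-reversing functions $f_*:X\to Y$, $f^*:Y\to X$ such that $y\le f_*(x)$ iff $x\le f^*(y)$. The identity on $X$ is the pair whose both components are $x\mapsto x^\perp$. Composition: $(g\circ f)_*=g_*\circ(-)^\perp\circ f_*$, $(g\circ f)^*=f^*\circ(-)^\perp\circ g^*$. Dagger: $(f_*,f^* )^\dagger=(f^*,f_* )$. It is a dagger kernel category whose zero object is the one-element lattice, with the kernel of $f$ being the downset morphism $\downarrow f^*(1)\to X$; here, for $a\in X$, $\downarrow a=\{u\le a\}$ with complement $u^{\perp_a}=a\wedge u^\perp$, and $a:\downarrow a\to X$ has $a_*(u)=u^\perp$,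 $a^*(x)=a\wedge x^\perp$. In a dagger kernel category, $\mathrm{KSub}(X)$ is the poset of dagger-mono kernels into $X$ modulo isomorphism, ordered by $m\le n$ iff $m=n\circ\varphi$ for some $\varphi$; it is an orthomodular lattice with $m^\perp=\ker(m^\dagger)$. $\mathrm{coker}(f)=\ker(f^\dagger)^\dagger$, $f^{-1}(n)=\ker(\mathrm{coker}(n)\circ f)$, and $\exists_f(m)=\ker(\mathrm{coker}(f\circ m))$. *)

From Stdlib Require Import Classical.

Record OMLd := MkOML {
  car :> Type;
  le : car -> car -> Prop;
  meet : car -> car -> car;
  join : car -> car -> car;
  bot : car;
  top : car;
  orth : car -> car }.

Arguments le {o} _ _.
Arguments meet {o} _ _.
Arguments join {o} _ _.
Arguments orth {o} _.

Record isOML (X : OMLd) : Prop := {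
  le_refl : forall x : X, le x x;
  le_trans : forall x y z : X, le x y -> le y z -> le x z;
  le_antisym : forall x y : X, le x y -> le y x -> x = y;
  meet_glb : forall x y z : X, le z (meet x y) <-> (le z x /\ le z y);
  join_lub : forall x y z : X, le (join x y) z <-> (le x z /\ le y z);
  bot_le : forall x : X, le (bot X) x;
  le_top : forall x : X, le x (top X);
  orth_rev : forall x y : X, le x y -> le (orth y) (orth x);
  orth_inv : forall x : X, orth (orth x) = x;
  meet_orth : forall x : X, meet x (orth x) = bot X;
  join_orth : forall x : X, join x (orth x) = top X;
  orthomod : forall x y : X, le x y -> y = join x (meet (orth x) y) }.

Arguments le_refl {X} _ _.
Arguments le_trans {X} _ _ _ _ _ _.
Arguments meet_glb {X} _ _ _ _.
Arguments join_lub {X} _ _ _ _.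
Arguments bot_le {X} _ _.

Lemma meet_le_l (X : OMLd) (HX : isOML X) (x y : X) : le (meet x y) x.
Proof. exact (proj1 (proj1 (meet_glb HX x y (meet x y)) (le_refl HX _))). Qed.

Record mor (X Y : OMLd) := Mor { ms : X -> Y ; mu : Y -> X }.
Arguments Mor {X Y} _ _.
Arguments ms {X Y} _ _.
Arguments mu {X Y} _ _.

(** (f_*, f^* ) order reversing with  y <= f_*(x)  iff  x <= f^*(y). *)
Definition isMor {X Y : OMLd} (f : mor X Y) : Prop :=
  (forall x x' : X, le x x' -> le (ms f x') (ms f x)) /\
  (forall y y' : Y, le y y' -> le (mu f y') (mu f y)) /\
  (forall (x : X) (y : Y), le y (ms f x) <-> le x (mu f y)).

Definition meq {X Y : OMLd} (f g : mor X Y) : Prop :=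
  (forall x, ms f x = ms g x) /\ (forall y, mu f y = mu g y).

Definition idm (X : OMLd) : mor X X := Mor (@orth X) (@orth X).

Definition comp {X Y Z : OMLd} (g : mor Y Z) (f : mor X Y) : mor X Z :=
  Mor (fun x => ms g (orth (ms f x))) (fun z => mu f (orth (mu g z))).

Definition dag {X Y : OMLd} (f : mor X Y) : mor Y X := Mor (mu f) (ms f).

Definition ZeroO : OMLd :=
  MkOML unit (fun _ _ => True) (fun _ _ => tt) (fun _ _ => tt) tt tt (fun _ => tt).

Definition toZero (X : OMLd) : mor X ZeroO := @Mor X ZeroO (fun _ => (tt : car ZeroO)) (fun _ => top X).
Definition fromZero (Y : OMLd) : mor ZeroO Y := @Mor ZeroO Y (fun _ => top Y) (fun _ => (tt : car ZeroO)).
Definition zmor (X Y : OMLd) : mor X Y := comp (fromZero Y) (toZero X).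

Definition isKernel {X Y K : OMLd} (f : mor X Y) (k : mor K X) : Prop :=
  isMor k /\ meq (comp f k) (zmor K Y) /\
  forall (Z : OMLd), isOML Z -> forall g : mor Z X, isMor g ->
    meq (comp f g) (zmor Z Y) ->
    exists h : mor Z K, isMor h /\ meq (comp k h) g /\
      forall h' : mor Z K, isMor h' -> meq (comp k h') g -> meq h' h.

Definition isDaggerMono {K X : OMLd} (k : mor K X) : Prop :=
  meq (comp (dag k) k) (idm K).

Definition isDaggerKernel {K X : OMLd} (k : mor K X) : Prop :=
  isOML K /\ isDaggerMono k /\
  exists (Y : OMLd), isOML Y /\ exists f : mor X Y, isMor f /\ isKernel f k.

(** KSub(X): order and identification modulo isomorphism. *)
Definition ksle {K L X : OMLd} (m : mor K X) (n : mor L X) : Prop :=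
  exists phi : mor K L, isMor phi /\ meq m (comp n phi).

Definition kseq {K L X : OMLd} (m : mor K X) (n : mor L X) : Prop :=
  exists (phi : mor K L) (psi : mor L K), isMor phi /\ isMor psi /\
    meq (comp psi phi) (idm K) /\ meq (comp phi psi) (idm L) /\
    meq m (comp n phi).

Section Down.
Variables (X : OMLd) (HX : isOML X).

Definition down (a : X) : OMLd :=
  MkOML {u : X | le u a}
    (fun u v => le (proj1_sig u) (proj1_sig v))
    (fun u v => exist (fun w => le w a) (meet (proj1_sig u) (proj1_sig v))
                  (le_trans HX _ _ _ (meet_le_l X HX _ _) (proj2_sig u)))
    (fun u v => exist (fun w => le w a) (join (proj1_sig u) (proj1_sig v))
                  (proj2 (join_lub HX _ _ a) (conj (proj2_sig u) (proj2_sig v))))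
    (exist (fun u => le u a) (bot X) (bot_le HX a))
    (exist (fun u => le u a) a (le_refl HX a))
    (fun u => exist (fun w => le w a) (meet a (orth (proj1_sig u))) (meet_le_l X HX _ _)).

Definition dmor (a : X) : mor (down a) X :=
  @Mor (down a) X (fun u : {w : X | le w a} => orth (proj1_sig u))
      (fun x => exist (fun u => le u a) (meet a (orth x)) (meet_le_l X HX _ _)).
End Down.

(** The chosen kernel of f : X → Y is the downset morphism ↓f^*(1) → X. *)
Definition kerm {X Y : OMLd} (HX : isOML X) (f : mor X Y) :=
  dmor X HX (mu f (top Y)).

Definition coker {X Y : OMLd} (HY : isOML Y) (f : mor X Y) :=
  dag (kerm HY (dag f)).

Definition preim {X Y L : OMLd} (HX : isOML X) (HY : isOML Y)
  (f : mor X Y) (n : mor L Y) :=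
  kerm HX (comp (coker HY n) f).

Definition exim {X Y K : OMLd} (HY : isOML Y) (f : mor X Y) (m : mor K X) :=
  kerm HY (coker HY (comp f m)).

(* The downset morphism a : ↓a → X is a dagger mono whose range condition
   reads off the Galois connection: for a morphism f, the composite f ∘ a is
   zero iff a ≤ f^*(1).  Hence ↓f^*(1) → X is a kernel of f, with the
   factorisation of g through it given by a^† ∘ g (the orthomodular law
   makes a ∘ a^† fix everything above a^⊥), and a ≤ b iff ↓a → X factors
   through ↓b → X.  Kernels of a morphism are unique up to isomorphism, so
   every dagger kernel is isomorphic to some ↓a → X; and the orthocomplement,
   ∃_f and f^{-1} are computed from the chosen kernels, which are again
   downset morphisms with the stated tops. *)

From Stdlib Require Import ProofIrrelevance.

Section OrthomodularLattice.
Variables (X : OMLd) (HX : isOML X).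

Lemma le_ext (p q : X) : (forall z, le z p <-> le z q) -> p = q.
Proof.
  intros H. apply (le_antisym X HX); apply H, (le_refl HX).
Qed.

Lemma meet_le_r (x y : X) : le (meet x y) y.
Proof. exact (proj2 (proj1 (meet_glb HX x y (meet x y)) (le_refl HX _))). Qed.

Lemma le_meet (x y z : X) : le z x -> le z y -> le z (meet x y).
Proof. intros; apply (meet_glb HX); auto. Qed.

Lemma meet_comm (x y : X) : meet x y = meet y x.
Proof. apply le_ext; intros z; rewrite !(meet_glb HX); tauto. Qed.

Lemma orth_swap (x y : X) : le x (orth y) <-> le y (orth x).
Proof.
  split; intros H; pose proof (orth_rev X HX _ _ H) as H'; rewrite (orth_inv X HX) in H';
    exact H'.
Qed.

Lemma orth_swap2 (x y : X) : le (orth x) y <-> le (orth y) x.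
Proof.
  split; intros H; pose proof (orth_rev X HX _ _ H) as H'; rewrite (orth_inv X HX) in H';
    exact H'.
Qed.

Lemma orth_inj (x y : X) : orth x = orth y -> x = y.
Proof. intros H. rewrite <- (orth_inv X HX x), <- (orth_inv X HX y), H. reflexivity. Qed.

Lemma orth_join (x y : X) : orth (join x y) = meet (orth x) (orth y).
Proof.
  apply le_ext; intros z. rewrite orth_swap, (join_lub HX), (meet_glb HX), !(orth_swap z).
  tauto.
Qed.

(* The relative orthocomplement u ↦ a ∧ u^⊥ of ↓a is involutive: this is the
   orthomodular law for a^⊥ ≤ u^⊥. *)
Lemma meet_orth_meet_orth (u a : X) : le u a -> meet a (orth (meet a (orth u))) = u.
Proof.
  intros H.
  pose proof (orthomod X HX (orth a) (orth u) (orth_rev X HX _ _ H)) as E.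
  apply (f_equal (@orth X)) in E.
  rewrite (orth_inv X HX), orth_join, !(orth_inv X HX) in E.
  symmetry; exact E.
Qed.

End OrthomodularLattice.

Section Morphisms.

Lemma isMor_Galois {A B : OMLd} (HA : isOML A) (HB : isOML B) (f : mor A B) :
  (forall x y, le y (ms f x) <-> le x (mu f y)) -> isMor f.
Proof.
  intros G. split; [|split]; [| | exact G].
  - intros x x' H. apply G. apply (le_trans HA _ _ _ H). apply G, (le_refl HB).
  - intros y y' H. apply G. apply (le_trans HB _ _ _ H). apply G, (le_refl HA).
Qed.

(* A Galois connection is determined by either adjoint. *)
Lemma meq_of_ms {A B : OMLd} (HA : isOML A) (f g : mor A B) :
  isMor f -> isMor g -> (forall x, ms f x = ms g x) -> meq f g.
Proof.
  intros [_ [_ Gf]] [_ [_ Gg]] E. split; [exact E|].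
  intros y. apply (le_ext A HA); intros z. rewrite <- Gf, <- Gg, E. tauto.
Qed.

Lemma meq_sym {A B : OMLd} (f g : mor A B) : meq f g -> meq g f.
Proof. intros [H1 H2]; split; intros; symmetry; auto. Qed.

Lemma meq_trans {A B : OMLd} (f g h : mor A B) : meq f g -> meq g h -> meq f h.
Proof. intros [H1 H2] [H3 H4]; split; intros; [rewrite H1 | rewrite H2]; auto. Qed.

Lemma meq_comp_l {A B C : OMLd} (h : mor B C) (f g : mor A B) :
  meq f g -> meq (comp h f) (comp h g).
Proof. intros [H1 H2]; split; intros; simpl; [rewrite H1 | rewrite H2]; reflexivity. Qed.

Lemma meq_comp_r {A B C : OMLd} (f g : mor B C) (h : mor A B) :
  meq f g -> meq (comp f h) (comp g h).
Proof. intros [H1 H2]; split; intros; simpl; [rewrite H1 | rewrite H2]; reflexivity. Qed.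

Lemma comp_assoc {A B C D : OMLd} (h : mor C D) (g : mor B C) (f : mor A B) :
  meq (comp h (comp g f)) (comp (comp h g) f).
Proof. split; reflexivity. Qed.

Lemma comp_id_r {A B : OMLd} (HA : isOML A) (f : mor A B) : meq (comp f (idm A)) f.
Proof. split; intros; simpl; rewrite (orth_inv A HA); reflexivity. Qed.

Lemma comp_id_l {A B : OMLd} (HB : isOML B) (f : mor A B) : meq (comp (idm B) f) f.
Proof. split; intros; simpl; rewrite (orth_inv B HB); reflexivity. Qed.

Lemma isMor_idm (A : OMLd) (HA : isOML A) : isMor (idm A).
Proof. apply (isMor_Galois HA HA). intros x y. apply (orth_swap A HA). Qed.

Lemma isMor_dag {A B : OMLd} (f : mor A B) : isMor f -> isMor (dag f).
Proof.
  intros [H1 [H2 H3]]. split; [exact H2 | split; [exact H1|]].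
  intros x y. simpl. rewrite H3. tauto.
Qed.

Lemma isMor_comp {A B C : OMLd} (HA : isOML A) (HB : isOML B) (HC : isOML C)
  (g : mor B C) (f : mor A B) : isMor g -> isMor f -> isMor (comp g f).
Proof.
  intros [_ [_ Gg]] [_ [_ Gf]]. apply (isMor_Galois HA HC). intros x z. simpl.
  rewrite Gg, (orth_swap2 B HB), Gf. tauto.
Qed.

Lemma isMor_zmor {A B : OMLd} (HA : isOML A) (HB : isOML B) : isMor (zmor A B).
Proof.
  apply (isMor_Galois HA HB). intros x y. simpl.
  split; intros _; [apply (le_top A HA) | apply (le_top B HB)].
Qed.

Lemma comp_zero_iff {Z A B : OMLd} (HZ : isOML Z) (HA : isOML A) (HB : isOML B)
  (f : mor A B) (g : mor Z A) : isMor f -> isMor g ->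
  meq (comp f g) (zmor Z B) <-> le (orth (mu f (top B))) (ms g (top Z)).
Proof.
  intros Hf Hg. pose proof Hf as [_ [_ Gf]]. pose proof Hg as [Mg _]. split.
  - intros [E _]. specialize (E (top Z)). simpl in E.
    apply (orth_swap2 A HA), Gf. rewrite E. apply (le_refl HB).
  - intros H. apply (meq_of_ms HZ); [exact (isMor_comp HZ HA HB _ _ Hf Hg)
                                    | exact (isMor_zmor HZ HB) |].
    intros z. simpl. apply (le_antisym B HB); [apply (le_top B HB)|].
    apply Gf. apply (le_trans HA _ (orth (ms g (top Z)))).
    + apply (orth_rev A HA), Mg, (le_top Z HZ).
    + apply (orth_swap2 A HA). exact H.
Qed.

Lemma dagger_mono_cancel {Z K A : OMLd} (HK : isOML K) (k : mor K A) (h : mor Z K)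
  (g : mor Z A) : isDaggerMono k -> meq (comp k h) g -> meq h (comp (dag k) g).
Proof.
  intros Hk E.
  apply (meq_trans _ (comp (comp (dag k) k) h)).
  - apply (meq_trans _ (comp (idm K) h)); [apply meq_sym, (comp_id_l HK)|].
    apply meq_comp_r, meq_sym, Hk.
  - apply (meq_trans _ (comp (dag k) (comp k h))); [apply meq_sym, comp_assoc|].
    apply meq_comp_l, E.
Qed.

Lemma kseq_refl {K A : OMLd} (HK : isOML K) (m : mor K A) : kseq m m.
Proof.
  exists (idm K), (idm K).
  split; [apply (isMor_idm K HK)|]. split; [apply (isMor_idm K HK)|].
  split; [apply (comp_id_r HK)|]. split; [apply (comp_id_r HK)|].
  apply meq_sym, (comp_id_r HK).
Qed.

Lemma kseq_ksle_l {K L A : OMLd} (m : mor K A) (n : mor L A) : kseq m n -> ksle m n.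
Proof. intros [phi [_ [Hphi [_ [_ [_ E]]]]]]. exists phi. split; assumption. Qed.

Lemma kseq_ksle_r {K L A : OMLd} (HL : isOML L) (m : mor K A) (n : mor L A) :
  kseq m n -> ksle n m.
Proof.
  intros [phi [psi [_ [Hpsi [_ [E2 Em]]]]]]. exists psi. split; [exact Hpsi|].
  apply (meq_trans _ (comp n (idm L))); [apply meq_sym, (comp_id_r HL)|].
  apply (meq_trans _ (comp n (comp phi psi))); [apply meq_comp_l, meq_sym, E2|].
  apply (meq_trans _ (comp (comp n phi) psi)); [apply comp_assoc|].
  apply meq_comp_r, meq_sym, Em.
Qed.

Lemma kernel_endo_id {K A B : OMLd} (HK : isOML K) (f : mor A B) (m : mor K A)
  (h : mor K K) : isKernel f m -> isMor h -> meq (comp m h) m -> meq h (idm K).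
Proof.
  intros [Hm [Hm0 U]] Hh E.
  destruct (U K HK m Hm Hm0) as [h0 [_ [_ Uniq]]].
  apply (meq_trans _ h0); [exact (Uniq h Hh E)|].
  apply meq_sym, Uniq; [apply (isMor_idm K HK) | apply (comp_id_r HK)].
Qed.

Lemma kernel_unique {K L A B : OMLd} (HK : isOML K) (HL : isOML L) (f : mor A B)
  (m : mor K A) (n : mor L A) : isKernel f m -> isKernel f n -> kseq m n.
Proof.
  intros Km Kn. pose proof Km as [Hm [Hm0 Um]]. pose proof Kn as [Hn [Hn0 Un]].
  destruct (Un K HK m Hm Hm0) as [phi [Hphi [Ephi _]]].
  destruct (Um L HL n Hn Hn0) as [psi [Hpsi [Epsi _]]].
  exists phi, psi. split; [exact Hphi|]. split; [exact Hpsi|]. split; [|split].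
  - apply (kernel_endo_id HK f m); [exact Km | exact (isMor_comp HK HL HK _ _ Hpsi Hphi)|].
    apply (meq_trans _ (comp (comp m psi) phi)); [apply comp_assoc|].
    apply (meq_trans _ (comp n phi)); [apply meq_comp_r, Epsi | exact Ephi].
  - apply (kernel_endo_id HL f n); [exact Kn | exact (isMor_comp HL HK HL _ _ Hphi Hpsi)|].
    apply (meq_trans _ (comp (comp n phi) psi)); [apply comp_assoc|].
    apply (meq_trans _ (comp m psi)); [apply meq_comp_r, Ephi | exact Epsi].
  - apply meq_sym, Ephi.
Qed.

End Morphisms.

Section Downsets.
Variables (X : OMLd) (HX : isOML X).

Lemma down_eq (a : X) (u v : down X HX a) : proj1_sig u = proj1_sig v -> u = v.
Proof.
  destruct u as [u pu], v as [v pv]; simpl; intros ->. f_equal. apply proof_irrelevance.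
Qed.

Lemma down_OML (a : X) : isOML (down X HX a).
Proof.
  split.
  - intros u. exact (le_refl HX _).
  - intros u v w. exact (le_trans HX _ _ _).
  - intros u v H1 H2. apply down_eq. exact (le_antisym X HX _ _ H1 H2).
  - intros u v w. exact (meet_glb HX _ _ _).
  - intros u v w. exact (join_lub HX _ _ _).
  - intros u. exact (bot_le HX _).
  - intros u. exact (proj2_sig u).
  - intros u v H. simpl. apply (le_meet X HX); [apply (meet_le_l X HX)|].
    apply (le_trans HX _ _ _ (meet_le_r X HX _ _)), (orth_rev X HX), H.
  - intros u. apply down_eq, (meet_orth_meet_orth X HX), (proj2_sig u).
  - intros u. apply down_eq. simpl. apply (le_antisym X HX); [|apply (bot_le HX)].
    rewrite <- (meet_orth X HX (proj1_sig u)). apply (le_meet X HX); [apply (meet_le_l X HX)|].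
    apply (le_trans HX _ _ _ (meet_le_r X HX _ _)), (meet_le_r X HX).
  - intros u. apply down_eq. simpl. rewrite (meet_comm X HX). symmetry.
    apply (orthomod X HX), (proj2_sig u).
  - intros u v H. apply down_eq. simpl.
    replace (meet (meet a (orth (proj1_sig u))) (proj1_sig v))
      with (meet (orth (proj1_sig u)) (proj1_sig v)); [apply (orthomod X HX), H|].
    apply (le_ext X HX); intros z. rewrite !(meet_glb HX). split; [|tauto].
    intros [H1 H2]. repeat split; auto. exact (le_trans HX _ _ _ H2 (proj2_sig v)).
Qed.

Lemma isMor_dmor (c : X) : isMor (dmor X HX c).
Proof.
  apply (isMor_Galois (down_OML c) HX). intros u y. simpl.
  rewrite (meet_glb HX), (orth_swap X HX). pose proof (proj2_sig u). tauto.
Qed.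

Lemma dmor_dagger_mono (a : X) : isDaggerMono (dmor X HX a).
Proof. split; intros u; apply down_eq; simpl; rewrite (orth_inv X HX); reflexivity. Qed.

Lemma comp_dmor_zero_iff {Y : OMLd} (HY : isOML Y) (f : mor X Y) (a : X) :
  isMor f -> meq (comp f (dmor X HX a)) (zmor _ Y) <-> le a (mu f (top Y)).
Proof.
  intros Hf. rewrite (comp_zero_iff (down_OML a) HX HY _ _ Hf (isMor_dmor a)). simpl.
  rewrite (orth_swap2 X HX), (orth_inv X HX). tauto.
Qed.

Lemma dmor_factor {Z : OMLd} (HZ : isOML Z) (c : X) (g : mor Z X) :
  isMor g -> le (orth c) (ms g (top Z)) ->
  meq (comp (dmor X HX c) (comp (dag (dmor X HX c)) g)) g.
Proof.
  intros Hg Hc. pose proof Hg as [Mg _].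
  apply (meq_of_ms HZ); [|exact Hg|].
  - apply (isMor_comp HZ (down_OML c) HX); [apply isMor_dmor|].
    apply (isMor_comp HZ HX (down_OML c)); [apply isMor_dag, isMor_dmor | exact Hg].
  - intros z. simpl.
    assert (Hz : le (orth (ms g z)) c).
    { apply (orth_swap2 X HX), (le_trans HX _ _ _ Hc), Mg, (le_top Z HZ). }
    rewrite (meet_orth_meet_orth X HX _ _ Hz). apply (orth_inv X HX).
Qed.

Lemma dmor_kernel {Y : OMLd} (HY : isOML Y) (f : mor X Y) (c : X) :
  isMor f -> mu f (top Y) = c -> isKernel f (dmor X HX c).
Proof.
  intros Hf Ec. split; [apply isMor_dmor|]. split.
  - apply (comp_dmor_zero_iff HY f c Hf). rewrite Ec. apply (le_refl HX).
  - intros Z HZ g Hg Hg0.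
    exists (comp (dag (dmor X HX c)) g). split; [|split].
    + apply (isMor_comp HZ HX (down_OML c)); [apply isMor_dag, isMor_dmor | exact Hg].
    + apply (dmor_factor HZ c g Hg). rewrite <- Ec. exact (proj1 (comp_zero_iff HZ HX HY f g Hf Hg) Hg0).
    + intros h' _ E. exact (dagger_mono_cancel (down_OML c) _ h' g (dmor_dagger_mono c) E).
Qed.

Lemma dmor_dagger_kernel (a : X) : isDaggerKernel (dmor X HX a).
Proof.
  split; [apply down_OML|]. split; [apply dmor_dagger_mono|].
  exists (down X HX (orth a)). split; [apply down_OML|].
  exists (dag (dmor X HX (orth a))). split; [apply isMor_dag, isMor_dmor|].
  apply (dmor_kernel (down_OML (orth a))); [apply isMor_dag, isMor_dmor|].
  apply (orth_inv X HX).
Qed.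

Lemma le_ksle_dmor (a b : X) : le a b -> ksle (dmor X HX a) (dmor X HX b).
Proof.
  intros Hab. exists (comp (dag (dmor X HX b)) (dmor X HX a)). split.
  - apply (isMor_comp (down_OML a) HX (down_OML b)); [apply isMor_dag|]; apply isMor_dmor.
  - apply meq_sym, (dmor_factor (down_OML a)); [apply isMor_dmor|].
    apply (orth_rev X HX), Hab.
Qed.

Lemma ksle_dmor_le (a b : X) : ksle (dmor X HX a) (dmor X HX b) -> le a b.
Proof.
  intros [phi [_ [E _]]].
  specialize (E (exist (fun u => le u a) a (le_refl HX a))). simpl in E.
  apply (orth_inj X HX) in E. rewrite E. apply (meet_le_l X HX).
Qed.

Lemma kseq_dmor_eq (a b : X) : kseq (dmor X HX a) (dmor X HX b) -> a = b.
Proof.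
  intros E. apply (le_antisym X HX); apply ksle_dmor_le;
    [exact (kseq_ksle_l _ _ E) | exact (kseq_ksle_r (down_OML b) _ _ E)].
Qed.

Lemma dagger_kernel_kseq_dmor {K : OMLd} (m : mor K X) :
  isDaggerKernel m -> exists a : X, kseq m (dmor X HX a).
Proof.
  intros [HK [_ [Y [HY [f [Hf Km]]]]]]. exists (mu f (top Y)).
  exact (kernel_unique HK (down_OML _) f _ _ Km (dmor_kernel HY f _ Hf eq_refl)).
Qed.

Lemma kseq_dmor (a b : X) : a = b -> kseq (dmor X HX a) (dmor X HX b).
Proof. intros <-. apply (kseq_refl (down_OML a)). Qed.

End Downsets.

Lemma kerm_dag_dmor (X : OMLd) (HX : isOML X) (a : X) :
  kseq (kerm HX (dag (dmor X HX a))) (dmor X HX (orth a)).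
Proof. apply kseq_dmor. reflexivity. Qed.

Lemma exim_dmor (X Y : OMLd) (HX : isOML X) (HY : isOML Y) (f : mor X Y) (a : X) :
  kseq (exim HY f (dmor X HX a)) (dmor Y HY (orth (ms f a))).
Proof. apply kseq_dmor. simpl. rewrite (orth_inv X HX). reflexivity. Qed.

Lemma preim_dmor (X Y : OMLd) (HX : isOML X) (HY : isOML Y) (f : mor X Y) (b : Y) :
  kseq (preim HX HY f (dmor Y HY b)) (dmor X HX (mu f (orth b))).
Proof. apply kseq_dmor. simpl. rewrite (orth_inv Y HY). reflexivity. Qed.

Theorem mainTheorem7 (X : OMLd) (HX : isOML X) :
  (forall a : X, isDaggerKernel (dmor X HX a)) /\
  (forall a b : X, le a b <-> ksle (dmor X HX a) (dmor X HX b)) /\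
  (forall a b : X, kseq (dmor X HX a) (dmor X HX b) -> a = b) /\
  (forall (K : OMLd) (m : mor K X), isDaggerKernel m ->
     exists a : X, kseq m (dmor X HX a)) /\
  (forall a : X, kseq (kerm HX (dag (dmor X HX a))) (dmor X HX (orth a))) /\
  (forall (Y : OMLd) (HY : isOML Y) (f : mor X Y), isMor f ->
     (forall a : X,
        kseq (exim HY f (dmor X HX a)) (dmor Y HY (orth (ms f a)))) /\
     (forall b : Y,
        kseq (preim HX HY f (dmor Y HY b)) (dmor X HX (mu f (orth b))))).
Proof.
  split; [exact (dmor_dagger_kernel X HX)|].
  split; [intros a b; split; [apply le_ksle_dmor | apply ksle_dmor_le]|].
  split; [exact (kseq_dmor_eq X HX)|].
  split; [exact (@dagger_kernel_kseq_dmor X HX)|].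
  split; [exact (kerm_dag_dmor X HX)|].
  intros Y HY f _. split; [exact (exim_dmor X Y HX HY f) | exact (preim_dmor X Y HX HY f)].
Qed.
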